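(* A model of $\mathsf{Md}_\bot$ satisfies the inverse cancellation law $\mathsf{ICL}$ if and only if it satisfies the Common Inverse Law $\mathsf{CIL}$.
   Context: The signature has one sort, constants $0,1,\bot$, binary operations $+,\cdot$ and unary operations $-$ and $(\,\cdot\,)^{-1}$. $\mathsf{Md}_\bot$ is the set of equations (variables universally quantified): $(x+y)+z=x+(y+z)$; $x+y=y+x$; $x+0=x$; $x+(-x)=0\cdot x$; $(x\cdot y)\cdot z=x\cdot(y\cdot z)$; $x\cdot y=y\cdot x$; $1\cdot x=x$; $x\cdot(y+z)=x\cdot y+x\cdot z$; $-(-x)=x$; $0\cdot(x\cdot x)=0\cdot x$; $(x^{-1})^{-1}=x+0\cdot x^{-1}$; $x\cdot x^{-1}=1+0\cdot x^{-1}$; $(x\cdot y)^{-1}=x^{-1}\cdot y^{-1}$; $1^{-1}=1$; $0^{-1}=\bot$; $x+\bot=\bot$; $x\cdot\bot=\bot$. $\mathsf{ICL}$: $\forall x,y,z\,((x\neq 0\wedge x\neq\bot\wedge x^{-1}\cdot y=x^{-1}\cdot z)\rightarrow y=z)$. $\mathsf{CIL}$: $\forall x\,(x\neq 0\wedge x\neq\bot\rightarrow x\cdot x^{-1}=1)$. *)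

Set Implicit Arguments.

Record Sig := {
  car :> Type;
  zero : car; one : car; bot : car;
  add : car -> car -> car;
  mul : car -> car -> car;
  opp : car -> car;
  inv : car -> car
}.

Definition Md_bot (A : Sig) : Prop :=
  (forall x y z : A, add A (add A x y) z = add A x (add A y z)) /\
  (forall x y : A, add A x y = add A y x) /\
  (forall x : A, add A x (zero A) = x) /\
  (forall x : A, add A x (opp A x) = mul A (zero A) x) /\
  (forall x y z : A, mul A (mul A x y) z = mul A x (mul A y z)) /\
  (forall x y : A, mul A x y = mul A y x) /\
  (forall x : A, mul A (one A) x = x) /\
  (forall x y z : A, mul A x (add A y z) = add A (mul A x y) (mul A x z)) /\
  (forall x : A, opp A (opp A x) = x) /\
  (forall x : A, mul A (zero A) (mul A x x) = mul A (zero A) x) /\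
  (forall x : A, inv A (inv A x) = add A x (mul A (zero A) (inv A x))) /\
  (forall x : A, mul A x (inv A x) = add A (one A) (mul A (zero A) (inv A x))) /\
  (forall x y : A, inv A (mul A x y) = mul A (inv A x) (inv A y)) /\
  (inv A (one A) = one A) /\
  (inv A (zero A) = bot A) /\
  (forall x : A, add A x (bot A) = bot A) /\
  (forall x : A, mul A x (bot A) = bot A).

Definition ICL (A : Sig) : Prop :=
  forall x y z : A,
    x <> zero A -> x <> bot A ->
    mul A (inv A x) y = mul A (inv A x) z -> y = z.

Definition CIL (A : Sig) : Prop :=
  forall x : A, x <> zero A -> x <> bot A -> mul A x (inv A x) = one A.


(* Multiplying by [x] cancels [x^-1] under CIL, which gives ICL.  Conversely, in
   every model [x^-1 * (x * x^-1) = x^-1 = x^-1 * 1], because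
   [x * x^-1 = 1 + 0 * x^-1] and [0 * (x^-1 * x^-1) = 0 * x^-1]; ICL then
   cancels [x^-1] and yields [x * x^-1 = 1]. *)

Section MdBotInverse.

Variable A : Sig.
Hypothesis HA : Md_bot A.

Lemma mul_one_r (x : A) : mul A x (one A) = x.
Proof.
  destruct HA as (_ & _ & _ & _ & _ & mC & m1 & _).
  rewrite mC. apply m1.
Qed.

Lemma add_mul_zero_r (x : A) : add A x (mul A x (zero A)) = x.
Proof.
  destruct HA as (_ & _ & a0 & _ & _ & _ & _ & mD & _).
  transitivity (add A (mul A x (one A)) (mul A x (zero A))).
  - rewrite mul_one_r. reflexivity.
  - rewrite <- mD, a0. apply mul_one_r.
Qed.

Lemma inv_mul_mul_inv (x : A) :
  mul A (inv A x) (mul A x (inv A x)) = inv A x.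
Proof.
  destruct HA as (_ & _ & _ & _ & mA & mC & _ & mD & _ & z2 & _ & xi & _).
  rewrite xi, mD, mul_one_r.
  rewrite <- mA, (mC (inv A x) (zero A)), mA, z2, (mC (zero A) (inv A x)).
  apply add_mul_zero_r.
Qed.

Lemma ICL_CIL : ICL A -> CIL A.
Proof.
  intros icl x Hx0 Hxb.
  apply (icl x _ _ Hx0 Hxb).
  rewrite mul_one_r. apply inv_mul_mul_inv.
Qed.

Lemma CIL_ICL : CIL A -> ICL A.
Proof.
  destruct HA as (_ & _ & _ & _ & mA & _ & m1 & _).
  intros cil x y z Hx0 Hxb E.
  rewrite <- (m1 y), <- (m1 z), <- (cil x Hx0 Hxb), !mA, E.
  reflexivity.
Qed.

End MdBotInverse.

Theorem mainTheorem9 (A : Sig) : Md_bot A -> (ICL A <-> CIL A).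
Proof.
  intro HA. split; [apply ICL_CIL | apply CIL_ICL]; exact HA.
Qed.
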